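(* Let $H$ be the tournament on vertex set $\{u,v,w,a,b,c,d\}$ with edges $u\to v$, $u\to w$, $w\to v$, $u\to c$, $u\to d$, $v\to c$, $v\to d$, $a\to u$, $b\to u$, $a\to v$, $b\to v$, $a\to b$, $c\to d$, $c\to a$, $c\to b$, $d\to a$, $d\to b$, $w\to a$, $b\to w$, $w\to c$, $d\to w$. Then: (1) $H$ has a proper $2$-coloring in which $u$ and $v$ have the same color and all vertices of $N^-(u)\cup N^+(v)$ have the other color; (2) in every proper $2$-coloring of $H$, $u$ and $v$ have the same color.
   Context: A proper $2$-coloring of a tournament is a partition of its vertex set into $2$ sets each inducing an acyclic (transitive) subtournament, i.e. a $2$-coloring with no monochromatic cyclic triangle. $N^+(x)=\{y: x\to y\}$ and $N^-(x)=\{y: y\to x\}$. *)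

From mathcomp Require Import all_boot.
Set Implicit Arguments. Unset Strict Implicit. Unset Printing Implicit Defensive.

Definition V := 'I_7.
Definition u : V := @Ordinal 7 0 isT.
Definition v : V := @Ordinal 7 1 isT.
Definition w : V := @Ordinal 7 2 isT.
Definition a : V := @Ordinal 7 3 isT.
Definition b : V := @Ordinal 7 4 isT.
Definition c : V := @Ordinal 7 5 isT.
Definition d : V := @Ordinal 7 6 isT.

Definition H_arcs : seq (V * V) :=
  [:: (u,v); (u,w); (w,v); (u,c); (u,d); (v,c); (v,d); (a,u); (b,u);
      (a,v); (b,v); (a,b); (c,d); (c,a); (c,b); (d,a); (d,b); (w,a);
      (b,w); (w,c); (d,w)].

Definition H : rel V := fun x y => (x, y) \in H_arcs.

Definition cyclic_triangle (T : finType) (E : rel T) (x y z : T) : bool :=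
  [&& E x y, E y z & E z x].

Definition proper_2coloring (T : finType) (E : rel T) (col : T -> bool) : Prop :=
  forall x y z : T, cyclic_triangle E x y z -> ~ (col x = col y /\ col y = col z).

Definition Nin (T : finType) (E : rel T) (x : T) : {set T} := [set y | E y x].
Definition Nout (T : finType) (E : rel T) (x : T) : {set T} := [set y | E x y].

(* Part (1): colour {u, v, w} and {a, b, c, d} differently; each class is
   transitive, witnessed by the orderings u, w, v and c, d, a, b.
   Part (2): if u and v had different colours, then for x in {a, b} and
   y in {c, d} both x -> u -> y -> x and x -> v -> y -> x are cyclic, so x and y
   get different colours.  Hence a, b share one colour and c, d the other; the
   cyclic triangle c -> d -> w forces w to the colour of a and b, and then
   a -> b -> w -> a is monochromatic. *)

From mathcomp Require Import all_boot.

Set Implicit Arguments. Unset Strict Implicit. Unset Printing Implicit Defensive.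

Section ProperColoring.

Variables (T : finType) (E : rel T) (col : T -> bool).

Lemma proper_2coloring_of_rank (rank : T -> nat) :
  (forall x y, E x y -> col x = col y -> rank x < rank y) ->
  proper_2coloring E col.
Proof.
move=> rank_lt x y z /and3P[Exy Eyz Ezx] [cxy cyz].
have rxy := rank_lt x y Exy cxy; have ryz := rank_lt y z Eyz cyz.
have rzx := rank_lt z x Ezx (esym (etrans cxy cyz)).
by have := ltn_trans rxy (ltn_trans ryz rzx); rewrite ltnn.
Qed.

Hypothesis col_proper : proper_2coloring E col.

Lemma proper_triangle_neq x y z :
  cyclic_triangle E x y z -> col x = col y -> col z != col x.
Proof.
by move=> cxyz cxy; apply/eqP => czx; apply: (col_proper cxyz); rewrite czx cxy.
Qed.

Lemma proper_common_arc_neq x y p q :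
  cyclic_triangle E x p y -> cyclic_triangle E x q y ->
  col p != col q -> col x != col y.
Proof.
move=> cxpy cxqy cpq; apply/eqP => cxy.
have [cxp | cxp] := eqVneq (col x) (col p).
  by apply: (col_proper cxpy); rewrite -cxp cxy.
have cxq : col x = col q.
  by move: cxp cpq; case: (col x); case: (col p); case: (col q).
by apply: (col_proper cxqy); rewrite -cxq cxy.
Qed.

End ProperColoring.

Definition H_side (x : V) : bool := x \in [:: a; b; c; d].

Definition H_rank (x : V) : nat := index x [:: u; w; v; c; d; a; b].

Lemma H_side_proper : proper_2coloring H H_side.
Proof.
apply: (proper_2coloring_of_rank (rank := H_rank)) => x y.
have /allP rank_ok :
  all (fun e => (H_side e.1 == H_side e.2) ==> (H_rank e.1 < H_rank e.2)) H_arcs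
  by [].
by move=> /rank_ok /implyP rank_lt /eqP /rank_lt.
Qed.

Lemma H_same_color_uv col : proper_2coloring H col -> col u = col v.
Proof.
move=> col_proper; apply/eqP; apply: contraT => cuv.
have neq x y : cyclic_triangle H x u y -> cyclic_triangle H x v y ->
    col x != col y.
  by move=> cxuy cxvy; exact: proper_common_arc_neq cxuy cxvy cuv.
have cac := neq a c isT isT; have cad := neq a d isT isT.
have cbc := neq b c isT isT.
have ccd : col c = col d.
  by move: cac cad; case: (col a); case: (col c); case: (col d).
have cab : col a = col b.
  by move: cac cbc; case: (col a); case: (col b); case: (col c).
have cwc := proper_triangle_neq col_proper (isT : cyclic_triangle H c d w) ccd.
have cwa : col w = col a.
  by move: cwc cac; case: (col w); case: (col a); case: (col c).
have := proper_triangle_neq col_proper (isT : cyclic_triangle H a b w) cab.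
by rewrite cwa eqxx.
Qed.

Theorem proposition5p3 :
  (exists col : V -> bool,
      [/\ proper_2coloring H col,
          col u = col v &
          forall x, x \in Nin H u :|: Nout H v -> col x <> col u])
  /\
  (forall col : V -> bool, proper_2coloring H col -> col u = col v).
Proof.
split; last exact: H_same_color_uv.
exists H_side; split=> //; first exact: H_side_proper.
by move=> x; rewrite !inE /H; case: x => -[|[|[|[|[|[|[|m]]]]]]].
Qed.
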